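(* Let $c\in(0,\sqrt2)$ and let $$\Omega_{p,\theta}:=\{(p,\theta): p\in(0,1),\ \theta\in(\theta_{min}(c),\theta_2(c,p)),\ \theta\neq\theta_1(c,p)\},$$ where only those $p$ with $(\theta_{min}(c),\theta_2(c,p))\neq\emptyset$ are considered. Then $$\sup_{(p,\theta)\in\Omega_{p,\theta}} L(c,p,\theta)\le 1-\frac{c}{\pi}\left(\sqrt{2-c^2}+\theta_{min}(c)\right).$$
   Context: Let $\lambda=\frac{\sqrt{2-c^2}}{2}$ and $\omega=\frac{\sqrt{2+c^2}}{2}$ (so $\lambda^2+\omega^2=1$). Define $\zeta(s)=-e^{\lambda s}\bigl(\cos(\omega s)-\frac{\lambda}{\omega}\sin(\omega s)\bigr)$ (the solution of $z^{(4)}+c^2z''+z=0$ with $\zeta(0)=-1$, $\zeta'(0)=0$ decaying as $s\to-\infty$), let $t^*>0$ be the smallest $s>0$ with $\zeta(s)=-1$ (it satisfies $\omega t^*\in(\pi,2\pi)$), and set $\theta_{min}(c):=\zeta'(t^* )=e^{\lambda t^*}\sin(\omega t^* )/\omega<0$. Equivalently, $\theta_{min}(c)$ is the unique negative $\theta$ with $e^{2\lambda t^*}=\theta^2+2\lambda\theta+1$ where $t^*=\frac1\omega\bigl(\frac{3\pi}{2}-\arctan\frac{\lambda\theta+1}{\omega\theta}\bigr)$. For $p\in(0,1)$ put $\xi=pc^4/4$, $\kappa_1^2=\frac{c^2-\sqrt{c^4-4\xi}}{2}$, $\kappa_2^2=\frac{c^2+\sqrt{c^4-4\xi}}{2}$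 ($0<\kappa_1<\kappa_2$), $\theta_{1,2}(c,p)=\dfrac{-2\sqrt{2-c^2}}{2-c^2\mp c^2\sqrt{1-p}}$ (upper sign for $\theta_1$), and $$L(c,p,\theta)=\frac12\Bigl(1+\frac{\kappa_2}{\kappa_1}\Bigr)+\frac1\pi\arctan\!\left(\frac{\kappa_2(-\kappa_1^2+\xi+\xi\theta\sqrt{2-c^2})}{\xi(\theta\kappa_1^2+\sqrt{2-c^2}+\theta(1-c^2))}\right)-\frac{\kappa_2}{\kappa_1\pi}\arctan\!\left(\frac{\kappa_1(-\kappa_2^2+\xi+\xi\theta\sqrt{2-c^2})}{\xi(\theta\kappa_2^2+\sqrt{2-c^2}+\theta(1-c^2))}\right),$$ which is defined for $\theta\neq\theta_1,\theta_2$ (these are exactly the zeros of the two denominators). Even one-troughed solutions of $z^{(4)}+c^2z''+(z+1)^+-\xi(z+1)^--1=0$, $z,z'\to0$ at $\pm\infty$, correspond to solutions $\theta\in(\theta_{min}(c),\theta_2(c,p))$ of $L(c,p,\theta)=k$, $k\in\mathbb{N}$, where $\theta$ is the slope $z'(t_1)$ at the leftmost point $t_1$ with $z(t_1)=-1$. *)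

From Stdlib Require Import Reals.
Open Scope R_scope.

Definition lam (c : R) : R := sqrt (2 - c^2) / 2.
Definition omg (c : R) : R := sqrt (2 + c^2) / 2.

Definition zeta (c s : R) : R :=
  - exp (lam c * s) * (cos (omg c * s) - lam c / omg c * sin (omg c * s)).

Definition is_tstar (c tt : R) : Prop :=
  0 < tt /\ zeta c tt = -1 /\ (forall s, 0 < s < tt -> zeta c s <> -1).

(* theta_min(c) = zeta'(tstar) = e^{lambda tstar} sin(omega tstar) / omega *)
Definition theta_min_at (c tt : R) : R :=
  exp (lam c * tt) * sin (omg c * tt) / omg c.

Definition xi (c p : R) : R := p * c^4 / 4.
Definition kappa1 (c p : R) : R := sqrt ((c^2 - sqrt (c^4 - 4 * xi c p)) / 2).
Definition kappa2 (c p : R) : R := sqrt ((c^2 + sqrt (c^4 - 4 * xi c p)) / 2).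

Definition theta1 (c p : R) : R :=
  - 2 * sqrt (2 - c^2) / (2 - c^2 - c^2 * sqrt (1 - p)).
Definition theta2 (c p : R) : R :=
  - 2 * sqrt (2 - c^2) / (2 - c^2 + c^2 * sqrt (1 - p)).

Definition Lfun (c p th : R) : R :=
  let k1 := kappa1 c p in
  let k2 := kappa2 c p in
  let x := xi c p in
  let s := sqrt (2 - c^2) in
  / 2 * (1 + k2 / k1)
  + / PI * atan (k2 * (- k1^2 + x + x * th * s) / (x * (th * k1^2 + s + th * (1 - c^2))))
  - k2 / (k1 * PI) * atan (k1 * (- k2^2 + x + x * th * s) / (x * (th * k2^2 + s + th * (1 - c^2)))).

(* With a = kappa1, b = kappa2 one has a^2 + b^2 = c^2 and a^2 b^2 = xi, so the
   second arctangent argument simplifies to M/(a E), where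
   E = sqrt(2-c^2) + theta (1 - a^2) < 0 is exactly the condition theta < theta2
   and M = a^2 (1 + theta sqrt(2-c^2)) - 1 < 0.  Bounding the first arctangent by
   pi/2 and the second from below by pi/2 - aE/M (from atan y <= y) gives
   L <= 1 - b (sqrt(2-c^2) + theta) / pi, and the bound follows from b <= c and
   theta_min < theta <= -sqrt(2-c^2). *)

From Stdlib Require Import Reals Lra Psatz.
Open Scope R_scope.

Lemma atan_le_id (y : R) : 0 < y -> atan y <= y.
Proof.
  intros Hy.
  destruct (MVT_cor2 atan (fun x => / (1 + x ^ 2)) 0 y Hy) as [z [Hz _]].
  { intros; apply derivable_pt_lim_atan. }
  rewrite atan_0 in Hz.
  assert (Hpos : 0 < 1 + z ^ 2) by nra.
  assert (Hle1 : / (1 + z ^ 2) <= 1).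
  { rewrite <- Rinv_1. apply Rinv_le_contravar; nra. }
  assert (0 < / (1 + z ^ 2)) by (apply Rinv_0_lt_compat; lra).
  nra.
Qed.

Lemma PI2_sub_inv_le_atan (y : R) : 0 < y -> PI / 2 - / y <= atan y.
Proof.
  intros Hy.
  pose proof (atan_le_id (/ y) (Rinv_0_lt_compat y Hy)) as H.
  rewrite atan_inv in H by exact Hy.
  lra.
Qed.

Section Kappa.

Variables c p : R.
Hypothesis Hp : 0 <= p <= 1.

Lemma sqrt_discriminant : sqrt (c ^ 4 - 4 * xi c p) = c ^ 2 * sqrt (1 - p).
Proof.
  replace (c ^ 4 - 4 * xi c p) with ((c ^ 2) ^ 2 * (1 - p)) by (unfold xi; field).
  rewrite sqrt_mult by nra.
  rewrite sqrt_pow2 by nra.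
  reflexivity.
Qed.

Lemma sqrt_one_sub_le1 : sqrt (1 - p) <= 1.
Proof.
  pose proof (sqrt_le_1_alt (1 - p) 1 ltac:(lra)) as H.
  rewrite sqrt_1 in H. exact H.
Qed.

Lemma kappa1_sq : kappa1 c p ^ 2 = c ^ 2 * (1 - sqrt (1 - p)) / 2.
Proof.
  pose proof sqrt_one_sub_le1.
  unfold kappa1. rewrite sqrt_discriminant, pow2_sqrt by nra.
  field.
Qed.

Lemma kappa2_sq : kappa2 c p ^ 2 = c ^ 2 * (1 + sqrt (1 - p)) / 2.
Proof.
  pose proof (sqrt_pos (1 - p)).
  unfold kappa2. rewrite sqrt_discriminant, pow2_sqrt by nra.
  field.
Qed.

Lemma kappa_sq_add : kappa1 c p ^ 2 + kappa2 c p ^ 2 = c ^ 2.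
Proof. rewrite kappa1_sq, kappa2_sq. field. Qed.

Lemma kappa_sq_mul : kappa1 c p ^ 2 * kappa2 c p ^ 2 = xi c p.
Proof.
  rewrite kappa1_sq, kappa2_sq.
  replace (c ^ 2 * (1 - sqrt (1 - p)) / 2 * (c ^ 2 * (1 + sqrt (1 - p)) / 2))
    with (c ^ 4 * (1 - sqrt (1 - p) ^ 2) / 4) by field.
  rewrite pow2_sqrt by lra.
  unfold xi. field.
Qed.

Lemma kappa2_le (Hc : 0 <= c) : kappa2 c p <= c.
Proof.
  pose proof sqrt_one_sub_le1.
  pose proof kappa2_sq.
  assert (0 <= kappa2 c p) by apply sqrt_pos.
  nra.
Qed.

Lemma kappa1_pos (Hc : c <> 0) (Hp0 : 0 < p) : 0 < kappa1 c p.
Proof.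
  pose proof (sqrt_lt_1_alt (1 - p) 1 ltac:(lra)) as Hq.
  rewrite sqrt_1 in Hq.
  assert (0 < c ^ 2) by (pose proof (pow_nonzero c 2 Hc); pose proof (pow2_ge_0 c); lra).
  unfold kappa1. rewrite sqrt_discriminant.
  apply sqrt_lt_R0. nra.
Qed.

Lemma kappa2_pos (Hc : c <> 0) : 0 < kappa2 c p.
Proof.
  pose proof (sqrt_pos (1 - p)).
  assert (0 < c ^ 2) by (pose proof (pow_nonzero c 2 Hc); pose proof (pow2_ge_0 c); lra).
  unfold kappa2. rewrite sqrt_discriminant.
  apply sqrt_lt_R0. nra.
Qed.

Hypothesis Hc2 : c ^ 2 < 2.

Lemma theta2_le_neg_sqrt : theta2 c p <= - sqrt (2 - c ^ 2).
Proof.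
  pose proof sqrt_one_sub_le1.
  pose proof (sqrt_pos (1 - p)).
  pose proof (sqrt_pos (2 - c ^ 2)).
  assert (Hden : 0 < 2 - c ^ 2 + c ^ 2 * sqrt (1 - p)) by nra.
  unfold theta2.
  apply (Rmult_le_reg_r (2 - c ^ 2 + c ^ 2 * sqrt (1 - p))); [exact Hden |].
  unfold Rdiv. rewrite Rmult_assoc, Rinv_l by lra.
  assert (2 - c ^ 2 + c ^ 2 * sqrt (1 - p) <= 2) by nra.
  nra.
Qed.

Lemma lt_theta2_iff (th : R) :
  th < theta2 c p <-> sqrt (2 - c ^ 2) + th * (1 - kappa1 c p ^ 2) < 0.
Proof.
  pose proof (sqrt_pos (1 - p)).
  assert (Hden : 0 < 2 - c ^ 2 + c ^ 2 * sqrt (1 - p)) by nra.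
  replace (1 - kappa1 c p ^ 2) with ((2 - c ^ 2 + c ^ 2 * sqrt (1 - p)) / 2)
    by (rewrite kappa1_sq; field).
  unfold theta2.
  split; intros Hth.
  - apply (Rmult_lt_compat_r (2 - c ^ 2 + c ^ 2 * sqrt (1 - p))) in Hth; [|exact Hden].
    unfold Rdiv in Hth. rewrite Rmult_assoc, Rinv_l in Hth by lra.
    lra.
  - apply (Rmult_lt_reg_r (2 - c ^ 2 + c ^ 2 * sqrt (1 - p))); [exact Hden |].
    unfold Rdiv. rewrite Rmult_assoc, Rinv_l by lra.
    lra.
Qed.

End Kappa.

Lemma atan_arg_kappa2_eq (a b c s th x : R) :
  a <> 0 -> b <> 0 -> x = a ^ 2 * b ^ 2 -> c ^ 2 = a ^ 2 + b ^ 2 ->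
  s + th * (1 - a ^ 2) <> 0 ->
  a * (- b ^ 2 + x + x * th * s) / (x * (th * b ^ 2 + s + th * (1 - c ^ 2)))
  = (a ^ 2 * (1 + th * s) - 1) / (a * (s + th * (1 - a ^ 2))).
Proof.
  intros Ha Hb -> Hc HE.
  rewrite Hc.
  field. repeat split; auto.
Qed.

(* The quadratic 1 + s th + th^2 is positive because s < 2. *)
Lemma ratio_bound (k s th : R) :
  0 <= k < 1 -> 0 < s < 2 -> s + th * (1 - k) < 0 ->
  0 < (s + th * (1 - k)) / (k * (1 + th * s) - 1) <= - s - th.
Proof.
  intros Hk Hs HE.
  assert (Hth : th < 0) by nra.
  assert (Hts : th * s < 0) by nra.
  assert (HM : k * (1 + th * s) - 1 < 0) by nra.
  assert (Hquad : 0 < 1 + th * s + th * th) by nra.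
  split.
  - replace ((s + th * (1 - k)) / (k * (1 + th * s) - 1))
      with (- (s + th * (1 - k)) / - (k * (1 + th * s) - 1)) by (field; lra).
    apply Rdiv_lt_0_compat; lra.
  - apply (Rmult_le_reg_r (- (k * (1 + th * s) - 1))); [lra |].
    replace ((s + th * (1 - k)) / (k * (1 + th * s) - 1) * - (k * (1 + th * s) - 1))
      with (- (s + th * (1 - k))) by (field; lra).
    assert (0 <= k * s * (1 + th * s + th * th)) by (apply Rmult_le_pos; nra).
    nra.
Qed.

Lemma Lfun_le_kappa2 (c p th : R) :
  0 < c -> c ^ 2 < 2 -> 0 < p < 1 -> th < theta2 c p ->
  Lfun c p th <= 1 - kappa2 c p / PI * (sqrt (2 - c ^ 2) + th).
Proof.
  intros Hc Hc2 Hp Hth.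
  assert (Hp' : 0 <= p <= 1) by lra.
  assert (Hc0 : c <> 0) by lra.
  set (s := sqrt (2 - c ^ 2)).
  set (a := kappa1 c p). set (b := kappa2 c p).
  assert (Ha : 0 < a) by (apply kappa1_pos; lra).
  assert (Hb : 0 < b) by (apply kappa2_pos; lra).
  assert (Ha1 : a ^ 2 < 1).
  { unfold a. rewrite kappa1_sq by exact Hp'.
    pose proof (sqrt_pos (1 - p)). nra. }
  assert (Hs : 0 < s < 2).
  { split; [apply sqrt_lt_R0; lra |].
    pose proof (sqrt_lt_1_alt (2 - c ^ 2) (2 ^ 2) ltac:(nra)) as H2.
    rewrite sqrt_pow2 in H2 by lra. exact H2. }
  assert (HE : s + th * (1 - a ^ 2) < 0) by (apply lt_theta2_iff; assumption).
  destruct (ratio_bound (a ^ 2) s th ltac:(nra) Hs HE) as [Hr0 Hr].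
  set (r := (s + th * (1 - a ^ 2)) / (a ^ 2 * (1 + th * s) - 1)) in *.
  set (A := b * (- a ^ 2 + xi c p + xi c p * th * s)
              / (xi c p * (th * a ^ 2 + s + th * (1 - c ^ 2)))).
  unfold Lfun. cbv zeta. fold a b s. fold A.
  rewrite (atan_arg_kappa2_eq a b c s th (xi c p)) by
    (lra || (symmetry; apply kappa_sq_mul; lra) || (symmetry; apply kappa_sq_add; lra)).
  set (B := (a ^ 2 * (1 + th * s) - 1) / (a * (s + th * (1 - a ^ 2)))).
  assert (Hts : th * s < 0) by nra.
  assert (HM : a ^ 2 * (1 + th * s) - 1 < 0) by nra.
  assert (HrB : / B = a * r) by (unfold B, r; field; repeat split; lra).
  assert (HB : 0 < B) by (rewrite <- (Rinv_inv B), HrB; apply Rinv_0_lt_compat; nra).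
  pose proof (PI2_sub_inv_le_atan B HB) as HatanB.
  rewrite HrB in HatanB.
  destruct (atan_bound A) as [_ HatanA].
  pose proof PI_RGT_0 as HPI.
  apply (Rmult_le_reg_r (a * PI)); [nra |].
  replace ((/ 2 * (1 + b / a) + / PI * atan A - b / (a * PI) * atan B) * (a * PI))
    with (a * PI / 2 + b * PI / 2 + a * atan A - b * atan B) by (field; lra).
  replace ((1 - b / PI * (s + th)) * (a * PI)) with (a * PI - a * b * (s + th))
    by (field; lra).
  assert (a * atan A <= a * (PI / 2)) by (apply Rmult_le_compat_l; lra).
  assert (b * (PI / 2 - a * r) <= b * atan B) by (apply Rmult_le_compat_l; lra).
  assert (a * b * r <= a * b * (- s - th)) by (apply Rmult_le_compat_l; nra).
  lra.
Qed.

Theorem lemma4 (c tstar : R) :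
  0 < c < sqrt 2 ->
  is_tstar c tstar ->
  forall p th : R,
    0 < p < 1 ->
    theta_min_at c tstar < th < theta2 c p ->
    th <> theta1 c p ->
    Lfun c p th <= 1 - c / PI * (sqrt (2 - c^2) + theta_min_at c tstar).
Proof.
  intros [Hc0 Hc] _ p th Hp [Hmin Hth2] _.
  assert (Hc2 : c ^ 2 < 2).
  { pose proof (pow2_sqrt 2 ltac:(lra)). nra. }
  assert (Hneg : sqrt (2 - c ^ 2) + th < 0).
  { pose proof (theta2_le_neg_sqrt c p ltac:(lra) Hc2). lra. }
  pose proof (kappa2_le c p ltac:(lra) ltac:(lra)) as Hk2c.
  pose proof (Lfun_le_kappa2 c p th Hc0 Hc2 Hp Hth2) as HL.
  pose proof PI_RGT_0 as HPI.
  assert (Hbound : - kappa2 c p * (sqrt (2 - c ^ 2) + th)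
                   <= - c * (sqrt (2 - c ^ 2) + theta_min_at c tstar)) by nra.
  unfold Rdiv in *.
  assert (0 < / PI) by (apply Rinv_0_lt_compat; lra).
  nra.
Qed.
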